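(* Let $G$ be a connected graph with $n\geq 2$ vertices and $m$ edges. Then for every integer $k\geq 0$, $$R^*(S^k(G))=8^kR^*(G)+\frac{8^k-2^k}{3}m(2m-2n+1).$$
   Context: All graphs are finite, undirected, without loops or multiple edges. For a connected graph $H$ and vertices $i,j$, the resistance distance $\Omega_{ij}$ is the effective resistance between $i$ and $j$ in the electrical network obtained from $H$ by replacing each edge by a unit resistor. With $d_i$ the degree of vertex $i$ in $H$ and the sum over unordered pairs of distinct vertices of $H$, the multiplicative degree-Kirchhoff index is $R^*(H)=\sum_{\{i,j\}\subseteq V(H)}d_id_j\Omega_{ij}$ (degrees and resistances taken in $H$). The subdivision $S(H)$ is the graph obtained from $H$ by replacing every edge with a path of length two. Iterated subdivisions: $S^0(G)=G$ and $S^k(G)=S(S^{k-1}(G))$ for $k\geq1$. *)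

From HB Require Import structures.
From mathcomp Require Import all_boot all_order all_algebra.
From Stdlib Require Import ClassicalEpsilon.
Set Implicit Arguments. Unset Strict Implicit. Unset Printing Implicit Defensive.
Import Order.TTheory GRing.Theory Num.Theory.

Record sgraph := SGraph {
  vert :> finType;
  adj : rel vert;
  adj_sym : symmetric adj;
  adj_irr : irreflexive adj }.

Definition is_edge (G : sgraph) (E : {set vert G}) : bool :=
  [exists x, exists y, adj x y && (E == [set x; y])].

Definition edge (G : sgraph) := {E : {set vert G} | is_edge E}.

Definition nverts (G : sgraph) : nat := #|vert G|.
Definition nedges (G : sgraph) : nat := #|{: edge G}|.
Definition deg (G : sgraph) (v : vert G) : nat := #|[pred u | adj v u]|.
Definition connected (G : sgraph) : Prop := forall x y : vert G, connect (@adj G) x y.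

(* Subdivision S(G): vertices = old vertices + one new vertex per edge;
   old vertex x is adjacent to the edge-vertex E iff x is an endpoint of E. *)
Definition sub_adj (G : sgraph) : rel (vert G + edge G)%type :=
  fun a b => match a, b with
             | inl x, inr E => x \in val E
             | inr E, inl x => x \in val E
             | _, _ => false
             end.

Lemma sub_adj_sym (G : sgraph) : symmetric (@sub_adj G).
Proof. by case=> [x|E] [y|F]. Qed.

Lemma sub_adj_irr (G : sgraph) : irreflexive (@sub_adj G).
Proof. by case. Qed.

Definition subdiv (G : sgraph) : sgraph :=
  @SGraph (vert G + edge G)%type (@sub_adj G) (@sub_adj_sym G) (@sub_adj_irr G).

Definition subdiv_iter (k : nat) (G : sgraph) : sgraph := iter k subdiv G.

Section Resistance.
Local Open Scope ring_scope.
Variable R : realFieldType.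

(* x is the vector of node potentials when a unit current enters at i and
   leaves at j, every edge being a unit resistor (Kirchhoff + Ohm):
   net current out of v equals the external injection at v. *)
Definition unit_current_potential (G : sgraph) (i j : vert G) (x : vert G -> R) : Prop :=
  forall v : vert G,
    \sum_(u | adj v u) (x v - x u) = (v == i)%:R - (v == j)%:R.

Definition resistance (G : sgraph) (i j : vert G) : R :=
  epsilon (inhabits 0)
    (fun r => exists x, unit_current_potential i j x /\ r = x i - x j).

(* multiplicative degree-Kirchhoff index: sum over unordered pairs {i,j}, i <> j
   (each pair counted once via the enumeration order) *)
Definition Rstar (G : sgraph) : R :=
  \sum_(i : vert G) \sum_(j : vert G | (enum_rank i < enum_rank j)%N)
     (deg i)%:R * (deg j)%:R * resistance i j.
End Resistance.

From mathcomp Require Import all_boot all_order all_algebra ring lra.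
From Stdlib Require Import ClassicalEpsilon.
Import GRing.Theory Num.Theory.
Set Implicit Arguments. Unset Strict Implicit. Unset Printing Implicit Defensive.
Local Open Scope ring_scope.

(* Fix a function g whose columns solve the Laplace equations
     L g(-,k) = e_k - d / 2m,
   i.e. a unit current enters at k and is drained from every vertex in proportion
   to its degree; such g exists because the Laplacian of a connected graph has
   exactly the constants as kernel.  Then Omega_ij = g_ii + g_jj - g_ij - g_ji, so
     R*(H) = 2m sum_v d_v g_vv - sum_(v,w) d_v d_w g_vw.
   For the subdivision S(H) a function of the same kind is written down explicitly
   in terms of g, and substituting it gives R*(S(H)) = 8 R*(H) + 2m(2m - 2n + 1).
   Subdivision doubles m and replaces n by n + m, so the correction m(2m - 2n + 1)
   doubles at every step, and the closed form follows by induction on k. *)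

Lemma sum_delta (T : finType) (R : pzSemiRingType) (P : pred T) (k : T) :
  \sum_(v | P v) (v == k)%:R = (P k)%:R :> R.
Proof.
rewrite (bigID (pred1 k)) /= [X in _ + X]big1 ?addr0 => [|v /andP[_ /negbTE ->] //].
have [Pk | nPk] := boolP (P k).
  by rewrite (big_pred1 k) ?eqxx // => v /=; case: (v =P k) => [->|]; rewrite ?Pk ?andbF.
by rewrite big_pred0 // => v; case: (v =P k) => [->|]; rewrite ?andbF // (negbTE nPk).
Qed.

Section Edges.
Variable G : sgraph.

Lemma sum_adj_swap (V : nmodType) (F : G -> G -> V) :
  \sum_(v : G) \sum_(u | adj v u) F v u = \sum_(v : G) \sum_(u | adj v u) F u v.
Proof.
rewrite (exchange_big_dep predT) //=; apply: eq_bigr => v _; apply: eq_bigl => u.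
by rewrite (@adj_sym G).
Qed.

Lemma adj_neq (v u : G) : adj v u -> u != v.
Proof. by move=> a; apply/eqP=> e; move: a; rewrite e (@adj_irr G). Qed.

Lemma is_edge_adj (v u : G) : adj v u -> is_edge [set v; u].
Proof. by move=> a; apply/existsP; exists v; apply/existsP; exists u; rewrite a eqxx. Qed.

Definition edge_of_adj (v u : G) (a : adj v u) : edge G :=
  exist (fun E => is_edge E) _ (is_edge_adj a).

Lemma edge_card (e : edge G) : #|val e| = 2%N.
Proof.
case: e => E /= /existsP[x /existsP[y /andP[a /eqP ->]]].
by rewrite cards2 eq_sym (adj_neq a).
Qed.

Lemma edge_endpoint (e : edge G) (v : G) :
  v \in val e -> exists2 u, adj v u & val e = [set v; u].
Proof.
case: e => E /= /existsP[x /existsP[y /andP[a /eqP ->]]].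
rewrite in_set2 => /orP[] /eqP ->; first by exists y.
by exists x; [rewrite (@adj_sym G) | rewrite setUC].
Qed.

Lemma sum_edges_at (V : nmodType) (v : G) (F : {set G} -> V) :
  \sum_(e : edge G | v \in val e) F (val e) = \sum_(u | adj v u) F [set v; u].
Proof.
pose c (e : edge G) (u : G) := adj v u && (val e == [set v; u]).
have other_end u u' : adj v u -> adj v u' -> [set v; u] = [set v; u'] -> u = u'.
  move=> a a' E; have : u \in [set v; u'] by rewrite -E set22.
  by rewrite in_set2 (negbTE (adj_neq a)) => /eqP.
transitivity (\sum_(e : edge G) \sum_(u | c e u) F [set v; u]).
  rewrite big_mkcond; apply: eq_bigr => e _.
  case: ifP => ve; last first.
    rewrite big_pred0 // => u; apply/andP => [[_ /eqP E]].
    by move: ve; rewrite E set21.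
  have [u0 a0 E0] := edge_endpoint ve.
  rewrite (big_pred1 u0) ?E0 // => u; rewrite /c E0 /=.
  apply/andP/eqP => [[a /eqP E]|->]; last by rewrite a0 eqxx.
  exact: other_end a a0 (esym E).
rewrite (exchange_big_dep (fun u => adj v u)) /=; last by move=> e u _ /andP[].
apply: eq_bigr => u a; rewrite (big_pred1 (edge_of_adj a)) // => e /=.
by rewrite /c a /=; apply/eqP/eqP => [E|-> //]; apply: val_inj.
Qed.

Lemma deg_subdiv_old (v : G) : @deg (subdiv G) (inl v) = deg v.
Proof.
rewrite /deg -!sum1_card big_sumType /= big_pred0 // add0n.
exact: (@sum_edges_at nat v (fun _ => 1%N)).
Qed.

Lemma deg_subdiv_new (e : edge G) : @deg (subdiv G) (inr e) = 2%N.
Proof.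
rewrite /deg -sum1_card big_sumType /= [X in (_ + X)%N]big_pred0 // addn0.
by rewrite (eq_bigl (mem (val e))) ?sum1_card ?edge_card.
Qed.

Variable R : pzSemiRingType.

Lemma sum_adj_const (c : R) (v : G) : \sum_(u | adj v u) c = (deg v)%:R * c.
Proof.
have -> : \sum_(u | adj v u) c = \sum_(u in [pred u | adj v u]) c by [].
by rewrite sumr_const mulr_natl.
Qed.

Lemma sum_edges_at_const (c : R) (v : G) :
  \sum_(e : edge G | v \in val e) c = (deg v)%:R * c.
Proof. by rewrite (sum_edges_at v (fun _ => c)) sum_adj_const. Qed.

Lemma sum_edge_const (c : R) (e : edge G) : \sum_(a in val e) c = 2 * c.
Proof. by rewrite sumr_const edge_card mulr_natl. Qed.

Lemma sum_edges_at_ends (v : G) (F : G -> R) :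
  \sum_(e : edge G | v \in val e) \sum_(a in val e) F a
  = (deg v)%:R * F v + \sum_(u | adj v u) F u.
Proof.
rewrite (sum_edges_at v (fun E => \sum_(a in E) F a)).
rewrite (eq_bigr (fun u => F v + F u)) => [|u a]; last first.
  by rewrite big_setU1 ?big_set1 // inE eq_sym adj_neq.
by rewrite big_split /= sum_adj_const.
Qed.

Lemma sum_edge_ends (F : G -> R) :
  \sum_(e : edge G) \sum_(a in val e) F a = \sum_(v : G) (deg v)%:R * F v.
Proof.
rewrite (exchange_big_dep predT) //=; apply: eq_bigr => v _.
by rewrite -sum_edges_at_const.
Qed.

Lemma sum_edge_pairs (F : G -> G -> R) :
  \sum_(e : edge G) \sum_(f : edge G) \sum_(a in val e) \sum_(c in val f) F a c
  = \sum_(a : G) \sum_(c : G) (deg a)%:R * (deg c)%:R * F a c.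
Proof.
transitivity (\sum_(e : edge G) \sum_(a in val e) \sum_(c : G) (deg c)%:R * F a c).
  apply: eq_bigr => e _; rewrite exchange_big; apply: eq_bigr => a _.
  exact: sum_edge_ends.
rewrite sum_edge_ends; apply: eq_bigr => a _.
by rewrite mulr_sumr; apply: eq_bigr => c _; rewrite mulrA.
Qed.

Lemma handshake : \sum_(v : G) (deg v)%:R = 2 * (nedges G)%:R :> R.
Proof.
have := sum_edge_ends (fun _ => 1).
rewrite (eq_bigr (fun _ => 2)) => [|e _]; last by rewrite sum_edge_const mulr1.
by rewrite sumr_const mulr_natr; under eq_bigr do rewrite mulr1.
Qed.

End Edges.

Section Laplacian.
Variables (R : realFieldType) (G : sgraph).

Definition lap (x : G -> R) (v : G) : R := \sum_(u | adj v u) (x v - x u).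

Lemma harmonic_const (x : G -> R) :
  connected G -> (forall v, lap x v = 0) -> forall u v, x u = x v.
Proof.
move=> cG hx.
have energy0 : \sum_(v : G) \sum_(u | adj v u) (x v - x u) ^+ 2 = 0.
  have flux0 : \sum_(v : G) \sum_(u | adj v u) x v * (x v - x u) = 0.
      by rewrite big1 // => v _; rewrite -mulr_sumr -/(lap x v) hx mulr0.
  transitivity (\sum_(v : G) \sum_(u | adj v u) x v * (x v - x u)
     + \sum_(v : G) \sum_(u | adj v u) x u * (x u - x v)).
    rewrite -big_split /=; apply: eq_bigr => v _; rewrite -big_split /=.
    by apply: eq_bigr => u _; ring.
  by rewrite -(sum_adj_swap (fun v u => x v * (x v - x u))) flux0 addr0.
have adj_eq v u : adj v u -> x v = x u.
  move=> a; apply/eqP; rewrite -subr_eq0 -sqrf_eq0.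
  have h := psumr_eq0P (fun v _ => sumr_ge0 _ (fun u _ => sqr_ge0 (x v - x u))) energy0.
  by rewrite (psumr_eq0P (fun u _ => sqr_ge0 (x v - x u)) (h v isT)).
move=> u v; have /connectP [p pth ->] := cG u v.
elim: p u pth => //= w p IH u /andP[a pth].
by rewrite (adj_eq _ _ a) (IH _ pth).
Qed.

Lemma sum_enum_val (V : nmodType) (F : G -> V) :
  \sum_(i < #|G|) F (enum_val i) = \sum_v F v.
Proof. by rewrite -big_enum_val. Qed.

Definition lap_mx : 'M[R]_#|G| :=
  \matrix_(i, j)
    ((i == j)%:R * (deg (enum_val i))%:R - (adj (enum_val i) (enum_val j))%:R).

Lemma mulmx_lap_mx (x : 'rV[R]_#|G|) j :
  (x *m lap_mx) 0 j = lap (fun v => x 0 (enum_rank v)) (enum_val j).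
Proof.
set w := enum_val j.
transitivity (\sum_v x 0 (enum_rank v) * ((v == w)%:R * (deg v)%:R - (adj v w)%:R)).
  rewrite mxE -sum_enum_val; apply: eq_bigr => i _.
  by rewrite enum_valK mxE (inj_eq enum_val_inj).
rewrite /lap sumrB sum_adj_const; under eq_bigr do rewrite mulrBr.
rewrite sumrB (bigD1 w) //= eqxx mul1r big1 => [|v /negbTE ->]; last first.
  by rewrite mul0r mulr0.
rewrite addr0 mulrC; congr (_ - _); rewrite [RHS]big_mkcond /=.
by apply: eq_bigr => v _; rewrite (@adj_sym G); case: (adj w v); rewrite ?mulr1 ?mulr0.
Qed.

Lemma lap_mx_const : lap_mx *m const_mx 1 = 0 :> 'cV_#|G|.
Proof.
apply/matrixP => i k; set w := enum_val i; rewrite !mxE.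
under eq_bigr do rewrite !mxE mulr1.
rewrite sumrB (bigD1 i) //= eqxx mul1r big1 => [|j /negbTE]; last first.
  by rewrite eq_sym => ->; rewrite mul0r.
rewrite addr0 (sum_enum_val (fun v => (adj w v)%:R)) -[in LHS](mulr1 (deg w)%:R).
rewrite -sum_adj_const big_mkcond; apply/eqP; rewrite subr_eq0; apply/eqP/eq_bigr => v _.
by case: (adj w v).
Qed.

(* The vertex [v0] only witnesses that [G] is nonempty. *)
Lemma kermx_lap_mx (v0 : G) :
  connected G -> (kermx lap_mx <= (const_mx 1 : 'rV[R]_#|G|))%MS.
Proof.
move=> cG; apply/row_subP => i; set x := row i (kermx lap_mx).
have harm v : lap (fun v => x 0 (enum_rank v)) v = 0.
  by rewrite -(enum_rankK v) -mulmx_lap_mx /x -row_mul mulmx_ker row0 mxE.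
have -> : x = x 0 (enum_rank v0) *: const_mx 1.
  apply/matrixP => a j; rewrite (ord1 a) [in RHS]mxE [const_mx _ _ _]mxE mulr1.
  by rewrite -[in LHS](enum_valK j); apply: harmonic_const cG harm _ _.
by apply: scalemx_sub; apply: submx_refl.
Qed.

Lemma lap_mx_range (v0 : G) :
  connected G -> (kermx (const_mx 1 : 'cV[R]_#|G|) <= lap_mx)%MS.
Proof.
move=> cG; set one : 'cV[R]_#|G| := const_mx 1.
have rank_one : \rank one = 1%N.
  apply/eqP; rewrite eqn_leq rank_leq_col lt0n mxrank_eq0; apply/eqP.
  by move/matrixP/(_ (enum_rank v0) 0); rewrite !mxE => /eqP; rewrite oner_eq0.
have ker_rank : (#|G| - \rank lap_mx <= 1)%N.
  by rewrite -mxrank_ker (leq_trans (mxrankS (kermx_lap_mx v0 cG))) ?rank_leq_row.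
have lap_sub : (lap_mx <= kermx one)%MS by rewrite sub_kermx lap_mx_const.
rewrite -(mxrank_leqif_sup lap_sub).2 eqn_leq mxrankS //= mxrank_ker rank_one.
by rewrite leq_subLR addnC -leq_subLR; exact: ker_rank.
Qed.

Lemma lap_solvable (b : G -> R) :
  connected G -> \sum_v b v = 0 -> exists x : G -> R, forall v, lap x v = b v.
Proof.
move=> cG sum_b; have [v0 _ | G0] := pickP (fun _ : G => true); last first.
  by exists (fun _ => 0) => v; have := G0 v.
pose bv : 'rV[R]_#|G| := \row_j b (enum_val j).
have bv_ker : (bv <= kermx (const_mx 1 : 'cV[R]_#|G|))%MS.
  rewrite sub_kermx; apply/eqP/matrixP => i j; rewrite !mxE -[RHS]sum_b -sum_enum_val.
  by apply: eq_bigr => k _; rewrite !mxE mulr1.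
have /submxP [D eD] := submx_trans bv_ker (lap_mx_range v0 cG).
exists (fun v => D 0 (enum_rank v)) => v.
by rewrite -{1}(enum_rankK v) -mulmx_lap_mx -eD mxE enum_rankK.
Qed.

End Laplacian.

Lemma sum_rank_pairs (T : finType) (V : nmodType) (H : T -> T -> V) :
  \sum_i \sum_(j | (enum_rank i < enum_rank j)%N) (H i j + H j i)
  = \sum_i \sum_(j | j != i) H i j.
Proof.
under eq_bigr do rewrite big_split; rewrite big_split /=.
rewrite [X in _ + X](exchange_big_dep predT) //= -big_split /=.
apply: eq_bigr => i _; rewrite [RHS](bigID (fun j => (enum_rank i < enum_rank j)%N)) /=.
congr (_ + _); apply: eq_bigl => j; first by case: (j =P i) => [->|]; rewrite ?ltnn.
rewrite -leqNgt [in RHS]leq_eqVlt (inj_eq (@ord_inj _)) (inj_eq (@enum_rank_inj _)).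
by case: (j =P i) => [->|]; rewrite ?ltnn.
Qed.

Section Green.
Variables (R : realFieldType) (G : sgraph).

Definition green (D : R) (g : G -> G -> R) :=
  forall v k, lap (fun w => g w k) v = (v == k)%:R - (deg v)%:R / D.

Definition deg_trace (g : G -> G -> R) : R := \sum_v (deg v)%:R * g v v.

Definition deg_form (g : G -> G -> R) : R :=
  \sum_v \sum_w (deg v)%:R * (deg w)%:R * g v w.

Lemma green_exists : connected G -> (0 < nedges G)%N ->
  exists g, green (2 * (nedges G)%:R) g.
Proof.
move=> cG m_gt0.
pose b (k v : G) : R := (v == k)%:R - (deg v)%:R / (2 * (nedges G)%:R).
have col k : exists x, forall v, lap x v = b k v.
  apply: lap_solvable cG _; rewrite sumrB -mulr_suml handshake.
  by rewrite sum_delta mulfV ?subrr // mulf_neq0 // pnatr_eq0 -lt0n.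
have [g gP] := fin_all_exists col.
by exists (fun v k => g k v) => v k; rewrite gP.
Qed.

Lemma resistance_green D g : connected G -> green D g ->
  forall i j : G, resistance R i j = g i i + g j j - g i j - g j i.
Proof.
move=> cG gG i j; pose x v := g v i - g v j.
have px : unit_current_potential i j x.
  move=> v; have := gG v i; have := gG v j; rewrite /lap => lap_j lap_i.
  rewrite (eq_bigr (fun u => (g v i - g u i) - (g v j - g u j))) => [|u _]; last first.
    by rewrite /x; ring.
  by rewrite sumrB lap_i lap_j; ring.
(* [resistance] picks some potential by choice; it differs from [x] by a
   harmonic, hence constant, function. *)
have [y [py ->]] : exists y, unit_current_potential i j y /\ resistance R i j = y i - y j.
  apply: (epsilon_spec (inhabits 0)
    (fun r => exists y, unit_current_potential i j y /\ r = y i - y j)).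
  by exists (x i - x j), x.
have harm v : lap (fun w => x w - y w) v = 0.
  rewrite /lap (eq_bigr (fun u => (x v - x u) - (y v - y u))) => [|u _]; last by ring.
  by rewrite sumrB px py subrr.
have := harmonic_const cG harm i j; rewrite /x; lra.
Qed.

Lemma Rstar_green D g : connected G -> green D g ->
  Rstar R G = 2 * (nedges G)%:R * deg_trace g - deg_form g.
Proof.
move=> cG gG; pose H (i j : G) := (deg i)%:R * (deg j)%:R * (g i i - g i j).
transitivity (\sum_i \sum_(j | (enum_rank i < enum_rank j)%N) (H i j + H j i)).
  apply: eq_bigr => i _; apply: eq_bigr => j _.
  by rewrite (resistance_green cG gG) /H; ring.
rewrite sum_rank_pairs [_ * deg_trace g]mulrC -handshake mulr_suml -sumrB.
apply: eq_bigr => i _.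
have -> : \sum_(j | j != i) H i j = \sum_j H i j.
  by rewrite [RHS](bigD1 i) //= /H subrr mulr0 add0r.
by rewrite mulr_sumr -sumrB; apply: eq_bigr => j _; rewrite /H; ring.
Qed.

End Green.

Section SubdivisionGreen.
Variables (R : realFieldType) (G : sgraph).
Local Notation S := (subdiv G).

Lemma sum_subdiv (F : S -> R) :
  \sum_(p : S) F p = \sum_(v : G) F (inl v) + \sum_(e : edge G) F (inr e).
Proof. exact: big_sumType. Qed.

Lemma lap_subdiv_old (x : S -> R) (v : G) :
  lap x (inl v) = \sum_(e : edge G | v \in val e) (x (inl v) - x (inr e)).
Proof. by rewrite /lap big_sumType /= big_pred0 // add0r. Qed.

Lemma lap_subdiv_new (x : S -> R) (e : edge G) :
  lap x (inr e) = \sum_(a in val e) (x (inr e) - x (inl a)).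
Proof. by rewrite /lap big_sumType /= [X in _ + X]big_pred0 // addr0. Qed.

(* Subdividing doubles every resistance, so potentials at old vertices double and
   an edge vertex sits at the mean of its two (doubled) endpoint potentials; the
   remaining terms correct for the current drained or injected at new vertices. *)
Definition subdiv_green (D : R) (g : G -> G -> R) (p q : S) : R :=
  match p, q with
  | inl v, inl w => 2 * g v w
  | inl v, inr f => \sum_(c in val f) g v c
  | inr e, inl w => \sum_(a in val e) g a w - (2 * D)^-1
  | inr e, inr f => (\sum_(a in val e) \sum_(c in val f) g a c) / 2
                    - (2 * D)^-1 + (e == f)%:R / 2
  end.

Lemma green_subdiv (D : R) (g : G -> G -> R) :
  D != 0 -> green D g -> green (2 * D) (subdiv_green D g).
Proof.
move=> D0 gG.
have lapG v k :
    \sum_(u | adj v u) g u k = (deg v)%:R * g v k - ((v == k)%:R - (deg v)%:R / D).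
  by rewrite -gG /lap sumrB sum_adj_const; ring.
case=> [v|e] [w|f] /=; rewrite ?lap_subdiv_old ?lap_subdiv_new ?deg_subdiv_old ?deg_subdiv_new.
- rewrite (eq_bigr (fun e : edge G => 2 * g v w + (2 * D)^-1 - \sum_(a in val e) g a w))
    => [|e _]; last by rewrite /=; ring.
  by rewrite sumrB sum_edges_at_const sum_edges_at_ends lapG; field.
- pose h a := \sum_(c in val f) g a c.
  rewrite (eq_bigr (fun e : edge G =>
      h v + (2 * D)^-1 - (\sum_(a in val e) h a) / 2 - (e == f)%:R / 2))
    => [|e _]; last by rewrite /h /=; ring.
  rewrite !sumrB -!mulr_suml sum_edges_at_const sum_edges_at_ends sum_delta.
  have -> : \sum_(u | adj v u) h u
            = (deg v)%:R * h v - ((v \in val f)%:R - 2 * ((deg v)%:R / D)).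
    rewrite /h exchange_big.
    under eq_bigr do rewrite lapG.
    rewrite sumrB -mulr_sumr sumrB sum_edge_const.
    by under [\sum_(c in _) (v == c)%:R]eq_bigr do rewrite eq_sym; rewrite sum_delta.
  by field.
- by rewrite sumrB sum_edge_const -mulr_sumr /=; field.
- by rewrite sumrB sum_edge_const /=; field.
Qed.

End SubdivisionGreen.

Section SubdivisionCounts.
Variable G : sgraph.
Local Notation S := (subdiv G).

Lemma nverts_subdiv : nverts S = (nverts G + nedges G)%N.
Proof. exact: card_sum. Qed.

Lemma nedges_subdiv (R : realFieldType) : (nedges S)%:R = 2 * (nedges G)%:R :> R.
Proof.
apply: (@mulfI _ 2); rewrite ?pnatr_eq0 // -[in LHS]handshake sum_subdiv.
under eq_bigr do rewrite deg_subdiv_old.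
under [X in _ + X]eq_bigr do rewrite deg_subdiv_new.
by rewrite handshake sumr_const; ring.
Qed.

Lemma subdiv_connected : connected G -> connected S.
Proof.
move=> cG.
have symS : connect_sym (@adj S) by apply: sym_connect_sym; exact: (@adj_sym S).
have old_old v u : connect (@adj S) (inl v) (inl u).
  have /connectP [p pth ->] := cG v u.
  elim: p v pth => [|w p IH] v /=; first by rewrite connect0.
  case/andP => a pth; apply: connect_trans (IH _ pth).
  apply: (@connect_trans _ _ (inr (edge_of_adj a))); apply: connect1.
    by rewrite /= set21.
  by rewrite /= set22.
have to_old (p : S) : exists v, connect (@adj S) p (inl v).
  case: p => [v|e]; first by exists v; rewrite connect0.
  have /card_gt0P [a ae] : (0 < #|val e|)%N by rewrite edge_card.
  by exists a; apply: connect1.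
move=> p q; have [v pv] := to_old p; have [u qu] := to_old q.
by apply: connect_trans pv _; apply: connect_trans (old_old v u) _; rewrite symS.
Qed.

Lemma nedges_gt0 : connected G -> (2 <= nverts G)%N -> (0 < nedges G)%N.
Proof.
move=> cG /card_gt1P [x [y [_ _ xy]]].
have /connectP [[|z p] /= pth ey] := cG x y; first by rewrite ey eqxx in xy.
by case/andP: pth => a _; apply/card_gt0P; exists (edge_of_adj a).
Qed.

End SubdivisionCounts.

Section SubdivisionKirchhoff.
Variables (R : realFieldType) (G : sgraph) (g : G -> G -> R).
Local Notation S := (subdiv G).
Local Notation m := (nedges G)%:R.
Hypotheses (gG : green (2 * m) g) (m_gt0 : (0 < nedges G)%N).

Let m_neq0 : m != 0 :> R. Proof. by rewrite pnatr_eq0 -lt0n. Qed.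
Let two_m_neq0 : 2 * m != 0 :> R. Proof. by rewrite mulf_neq0 ?m_neq0 ?pnatr_eq0. Qed.

Lemma sum_adj_green :
  \sum_(a : G) \sum_(u | adj a u) g a u = deg_trace g - (nverts G)%:R + 1.
Proof.
have lap_diag : \sum_a lap (fun w => g w a) a = (nverts G)%:R - 1.
  rewrite (eq_bigr _ (fun a _ => gG a a)) sumrB -mulr_suml handshake.
  by rewrite mulfV //; under eq_bigr do rewrite eqxx; rewrite sumr_const.
move: lap_diag; rewrite /lap; under eq_bigr do rewrite sumrB sum_adj_const.
by rewrite sumrB sum_adj_swap -/(deg_trace g) => lap_diag; lra.
Qed.

Local Notation gS := (subdiv_green (2 * m) g).
Local Notation wgS p q := ((@deg S p)%:R * (@deg S q)%:R * gS p q).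

Lemma deg_trace_subdiv :
  deg_trace gS = 4 * deg_trace g - (nverts G)%:R + m + 2^-1.
Proof.
have edge_diag : \sum_(e : edge G) \sum_(a in val e) \sum_(c in val e) g a c
                 = deg_trace g + \sum_(a : G) \sum_(u | adj a u) g a u.
  rewrite (exchange_big_dep predT) //= -big_split /=; apply: eq_bigr => a _.
  exact: (sum_edges_at_ends a (g a)).
rewrite /deg_trace sum_subdiv /=.
under eq_bigr do rewrite deg_subdiv_old.
under [X in _ + X]eq_bigr do rewrite deg_subdiv_new eqxx.
rewrite [X in _ + X](eq_bigr (fun e : edge G =>
    \sum_(a in val e) \sum_(c in val e) g a c + (1 - (2 * m)^-1))) => [|e _]; last first.
  by rewrite /=; field.
rewrite big_split /= edge_diag sum_adj_green sumr_const.
rewrite [X in X + _](eq_bigr (fun v => 2 * ((deg v)%:R * g v v))) => [|v _]; last by ring.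
by rewrite -mulr_sumr -/(deg_trace g) -/(nedges G); field.
Qed.

Lemma deg_form_subdiv : deg_form gS = 8 * deg_form g.
Proof.
rewrite /deg_form sum_subdiv; under eq_bigr do rewrite sum_subdiv.
under [X in _ + X]eq_bigr do rewrite sum_subdiv.
rewrite !big_split /=.
have old_old : \sum_(v : G) \sum_(w : G) wgS (inl v) (inl w) = 2 * deg_form g.
  rewrite /deg_form mulr_sumr; apply: eq_bigr => v _.
  rewrite mulr_sumr; apply: eq_bigr => w _.
  by rewrite !deg_subdiv_old /=; ring.
have old_new : \sum_(v : G) \sum_(f : edge G) wgS (inl v) (inr f) = 2 * deg_form g.
  rewrite /deg_form mulr_sumr; apply: eq_bigr => v _.
  rewrite (eq_bigr (fun f : edge G => 2 * (deg v)%:R * \sum_(c in val f) g v c))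
    => [|f _]; last first.
    by rewrite deg_subdiv_old deg_subdiv_new /=; ring.
  rewrite -mulr_sumr sum_edge_ends !mulr_sumr; apply: eq_bigr => w _; ring.
have new_old : \sum_(e : edge G) \sum_(w : G) wgS (inr e) (inl w)
               = 2 * deg_form g - 2 * m * (2 * (2 * m))^-1 * \sum_(w : G) (deg w)%:R.
  rewrite (exchange_big_dep predT) //= /deg_form.
  rewrite [X in _ = 2 * X - _](exchange_big_dep predT) //= !mulr_sumr -sumrB.
  apply: eq_big => // w _.
  rewrite (eq_bigr (fun e : edge G =>
      2 * (deg w)%:R * \sum_(a in val e) g a w - 2 * (deg w)%:R * (2 * (2 * m))^-1))
    => [|e _]; last first.
    by rewrite deg_subdiv_old deg_subdiv_new /=; ring.
  rewrite sumrB -mulr_sumr sum_edge_ends sumr_const -/(nedges G).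
  congr (_ - _); last by ring.
  by rewrite !mulr_sumr; apply: eq_bigr => a _; ring.
have new_new : \sum_(e : edge G) \sum_(f : edge G) wgS (inr e) (inr f)
               = 2 * deg_form g - 4 * (2 * (2 * m))^-1 * m * m + 2 * m.
  rewrite (eq_bigr (fun e : edge G =>
      2 * \sum_(f : edge G) \sum_(a in val e) \sum_(c in val f) g a c
      + (2 - 4 * (2 * (2 * m))^-1 * m))) => [|e _]; last first.
    rewrite (eq_bigr (fun f : edge G =>
        2 * (\sum_(a in val e) \sum_(c in val f) g a c)
        - 4 * (2 * (2 * m))^-1 + 2 * (f == e)%:R)) => [|f _]; last first.
      by rewrite !deg_subdiv_new /= eq_sym; field.
    rewrite big_split sumrB /= -!mulr_sumr sumr_const sum_delta -/(nedges G).
    (* [mulr1] evaluates [2 * true%:R], which [field] cannot read. *)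
    by rewrite mulr1; field.
  rewrite big_split /= -mulr_sumr sum_edge_pairs sumr_const -/(nedges G) -/(deg_form g).
  by field.
rewrite old_old old_new new_old new_new handshake -/(deg_form g).
by field.
Qed.
End SubdivisionKirchhoff.

Definition kirchhoff_defect (R : realFieldType) (G : sgraph) : R :=
  (nedges G)%:R * (2 * (nedges G)%:R - 2 * (nverts G)%:R + 1).

Lemma kirchhoff_defect_subdiv (R : realFieldType) (G : sgraph) :
  kirchhoff_defect R (subdiv G) = 2 * kirchhoff_defect R G.
Proof. by rewrite /kirchhoff_defect nedges_subdiv nverts_subdiv natrD; ring. Qed.

Lemma Rstar_subdiv (R : realFieldType) (G : sgraph) :
  connected G -> (0 < nedges G)%N ->
  Rstar R (subdiv G) = 8 * Rstar R G + 2 * kirchhoff_defect R G.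
Proof.
move=> cG m_gt0; have [g gG] := green_exists R cG m_gt0.
have two_m_neq0 : 2 * (nedges G)%:R != 0 :> R by rewrite mulf_neq0 ?pnatr_eq0 -?lt0n.
rewrite (Rstar_green cG gG) (Rstar_green (subdiv_connected cG) (green_subdiv two_m_neq0 gG)).
rewrite nedges_subdiv deg_trace_subdiv // deg_form_subdiv // /kirchhoff_defect.
by field.
Qed.

Lemma subdiv_iterS (k : nat) (G : sgraph) :
  subdiv_iter k.+1 G = subdiv (subdiv_iter k G).
Proof. by []. Qed.

Lemma subdiv_iter_connected (k : nat) (G : sgraph) :
  connected G -> connected (subdiv_iter k G).
Proof. by move=> cG; elim: k => // k; rewrite subdiv_iterS; apply: subdiv_connected. Qed.

Lemma nverts_subdiv_iter (k : nat) (G : sgraph) :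
  (nverts G <= nverts (subdiv_iter k G))%N.
Proof.
elim: k => // k IH; rewrite subdiv_iterS nverts_subdiv.
exact: leq_trans IH (leq_addr _ _).
Qed.

Lemma kirchhoff_defect_subdiv_iter (R : realFieldType) (k : nat) (G : sgraph) :
  kirchhoff_defect R (subdiv_iter k G) = 2 ^+ k * kirchhoff_defect R G.
Proof.
elim: k => [|k IH]; first by rewrite mul1r.
by rewrite subdiv_iterS kirchhoff_defect_subdiv IH exprS mulrA.
Qed.

Theorem theorem3p2 (R : realFieldType) (G : sgraph) (k : nat) :
  connected G -> (2 <= nverts G)%N ->
  Rstar R (subdiv_iter k G) =
    8 ^+ k * Rstar R G
    + (8 ^+ k - 2 ^+ k) / 3 * (nedges G)%:R
      * (2 * (nedges G)%:R - 2 * (nverts G)%:R + 1).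
Proof.
move=> cG n_ge2; rewrite -mulrA -/(kirchhoff_defect R G).
elim: k => [|k IH]; first by rewrite !expr0 subrr !mul0r mul1r addr0.
have cGk : connected (subdiv_iter k G) by apply: subdiv_iter_connected.
have m_gt0 := nedges_gt0 cGk (leq_trans n_ge2 (nverts_subdiv_iter _ _)).
rewrite subdiv_iterS Rstar_subdiv // IH kirchhoff_defect_subdiv_iter !exprS.
by field.
Qed.
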